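(* Let $\mathcal{W}^F$ be a trained Wilson network with $m$ rows and $n$ columns, where $F$ consists of either one pattern or two distinct patterns. Then every balanced coloring of $\mathcal{W}^F$ is an orbit coloring, i.e. its color classes are exactly the orbits of some subgroup of the automorphism group $\mathrm{aut}(\mathcal{W}^F)$.
   Context: Let $M=\{1,\dots,m\}$, $N=\{1,\dots,n\}$; nodes are the pairs $(i,j)\in M\times N$, all of the same type. The untrained Wilson network $\mathcal{W}$ has, for every ordered pair of distinct nodes in the same column, exactly one arrow of a single ''inhibitory'' type, and no other arrows. A pattern is determined by a function $g:N\to M$; its node set is $\mathcal{C}^g=\{(g(j),j):j\in N\}$ (one node from each column). Two patterns are distinct if their functions differ. For a set $F$ of patterns, the trained Wilson network $\mathcal{W}^F$ is obtained from $\mathcal{W}$ by adding, for each pattern $g\in F$, one arrow of a second ''excitatory'' type from each node of $\mathcal{C}^g$ to each other node of $\mathcal{C}^g$; the excitatory arrows are of the same type for all patterns, and arrows from different patterns are counted separately (so two nodes lying in two common patterns are joined by two excitatory arrows in each direction). The automorphism group $\mathrm{aut}(\mathcal{W}^F)$ consists of the node permutations preserving, for every ordered pair of nodes, the number of arrows of each type between them. A coloring is a partition of the nodes into color classes; it is balanced if whenever nodes $c,d$ have the same color, for each arrow type and each color $k$ the number of input arrows of that type to $c$ (counted with multiplicity) whose tail has color $k$ equals the corresponding number for $d$. *)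

From mathcomp Require Import all_boot all_fingroup.
Set Implicit Arguments. Unset Strict Implicit. Unset Printing Implicit Defensive.

Definition node (m n : nat) : finType := ('I_m * 'I_n)%type.

(* A pattern is a function g : N -> M; its node set is {(g j, j)}. *)
Definition pattern (m n : nat) := {ffun 'I_n -> 'I_m}.

Definition in_pattern m n (g : pattern m n) (c : node m n) : bool := g c.2 == c.1.

Definition inh m n (c d : node m n) : nat := ((c.2 == d.2) && (c != d) : bool).

Definition exc m n (F : seq (pattern m n)) (c d : node m n) : nat :=
  count (fun g => [&& c != d, in_pattern g c & in_pattern g d]) F.

Definition autW m n (F : seq (pattern m n)) : {set {perm node m n}} :=
  [set p : {perm node m n} | [forall c, forall d,
     (inh (p c) (p d) == inh c d) && (exc F (p c) (p d) == exc F c d)]].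

Definition balanced m n (F : seq (pattern m n)) (C : eqType) (col : node m n -> C) : Prop :=
  forall c d : node m n, col c = col d ->
    forall k : C,
      \sum_(e : node m n | col e == k) inh e c = \sum_(e : node m n | col e == k) inh e d
   /\ \sum_(e : node m n | col e == k) exc F e c = \sum_(e : node m n | col e == k) exc F e d.

Definition orbit_coloring m n (F : seq (pattern m n)) (C : eqType) (col : node m n -> C) : Prop :=
  exists H : {group {perm node m n}}, H \subset autW F /\
    forall c d : node m n, col c = col d <-> exists2 h, h \in H & h c = d.

(** Balance of the inhibitory arrows forces two nodes of the same colour to lie in
    columns with the same colour counts; balance of the excitatory arrows forces them to
    lie in the same number of patterns. For two patterns this determines the colours and
    pattern memberships of a column up to exchanging the two patterns. Such a
    correspondence is realised by an automorphism built column by column: permute the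
    columns, then permute the rows of each column so that colour and pattern membership
    match. The exchange of the patterns is only needed when some node lying in the first
    pattern alone has the colour of a node lying in the second pattern alone; balance then
    makes both patterns carry the same colours, and a column permutation realises the
    exchange globally. A single pattern [g] is the case [[:: g; g]], which has the same
    automorphisms and balanced colourings. *)

From mathcomp Require Import all_boot all_fingroup zify.
Set Implicit Arguments. Unset Strict Implicit. Unset Printing Implicit Defensive.

Section ColorStabilizer.
Variables (T : finType) (C : eqType) (col : T -> C).

Definition col_stab : {set {perm T}} := [set p : {perm T} | [forall x, col (p x) == col x]].

Lemma col_stabP (p : {perm T}) : reflect (forall x, col (p x) = col x) (p \in col_stab).
Proof. by rewrite inE; apply: (iffP forallP) => H x; apply/eqP. Qed.

Lemma group_set_col_stab : group_set col_stab.
Proof.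
apply/group_setP; split; first by apply/col_stabP => x; rewrite perm1.
by move=> p q /col_stabP Hp /col_stabP Hq; apply/col_stabP => x; rewrite permM Hq Hp.
Qed.

Canonical col_stab_group := Group group_set_col_stab.

End ColorStabilizer.

Section FibreMatching.
Variables (N : nat) (T : eqType).

Lemma perm_of_fibres (a b : 'I_N -> T) :
    (forall v, \sum_(i < N) (a i == v : nat) = \sum_(i < N) (b i == v : nat)) ->
  exists p : {perm 'I_N}, forall i, b (p i) = a i.
Proof.
move=> fibres.
have count_fibre (f : 'I_N -> T) v :
    count_mem v (mktuple f) = \sum_(i < N) (f i == v : nat).
  rewrite /= count_map -sum1_count big_mkcond big_enum /=.
  by apply: eq_bigr => i _; rewrite eq_sym; case: (f i == v).
have /tuple_permP[p Ep] : perm_eq (mktuple a) (mktuple b).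
  by apply/allP => v _; rewrite /= !count_fibre fibres.
exists p => i.
by have := congr1 (fun t => tnth t i) (val_inj Ep); rewrite !tnth_mktuple.
Qed.

Lemma perm_of_fibres_at (a b : 'I_N -> T) i0 i1 :
    (forall v, \sum_(i < N) (a i == v : nat) = \sum_(i < N) (b i == v : nat)) ->
    a i0 = b i1 ->
  exists2 p : {perm 'I_N}, forall i, b (p i) = a i & p i0 = i1.
Proof.
move=> /perm_of_fibres[p Ep] Ei.
exists (p * tperm (p i0) i1)%g => [i|]; last by rewrite permM tpermL.
rewrite permM; case: tpermP => [/perm_inj->|Epi|_ _]; rewrite ?Ep //.
by rewrite Ei -Epi Ep.
Qed.

End FibreMatching.

Lemma sum_drop_point (T : finType) (P Q : pred T) x : Q x ->
  \sum_(e | P e) ((e != x) && Q e : nat) + P x = \sum_(e | P e) (Q e : nat).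
Proof.
move=> Qx; case Px: (P x); last first.
  by rewrite addn0; apply: eq_bigr => e Pe; case: eqP Pe Px => [->->|].
rewrite (bigD1 x) // [RHS](bigD1 x) //= eqxx Qx addnC; congr (_ + _).
by apply: eq_bigr => e /andP[_ ->].
Qed.

Lemma sum_by_class (R : Type) (idx : R) (op : Monoid.com_law idx)
    (T : finType) (C : eqType) (col : T -> C) (f : T -> R) :
  \big[op/idx]_x f x =
  \big[op/idx]_(k <- undup [seq col x | x : T]) \big[op/idx]_(x | col x == k) f x.
Proof.
under [RHS]eq_bigr do rewrite big_mkcond.
rewrite exchange_big /=; apply: eq_bigr => x _.
rewrite (bigD1_seq (col x)) ?undup_uniq ?mem_undup ?map_f -?enumT ?mem_enum //= eqxx.
by rewrite big1_seq ?Monoid.mulm1 // => k /andP[neq _]; rewrite eq_sym (negbTE neq).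
Qed.

Lemma sum_bool_gt0 (I : finType) (P : pred I) : 0 < \sum_i (P i : nat) -> exists i, P i.
Proof.
case: (pickP P) => [i Pi|none]; first by exists i.
by rewrite big1 // => i _; rewrite none.
Qed.

Section Network.
Variables (m n : nat).
Local Notation node := (node m n).

Lemma autWP (F : seq (pattern m n)) (p : {perm node}) :
  reflect (forall c d, inh (p c) (p d) = inh c d /\ exc F (p c) (p d) = exc F c d)
          (p \in autW F).
Proof.
rewrite inE; apply: (iffP forallP) => [Hp c d|Hp c].
  by have /forallP/(_ d)/andP[/eqP-> /eqP->] := Hp c.
by apply/forallP => d; have [-> ->] := Hp c d; rewrite !eqxx.
Qed.

Lemma group_set_autW (F : seq (pattern m n)) : group_set (autW F).
Proof.
apply/group_setP; split; first by apply/autWP => c d; rewrite !perm1.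
move=> p q /autWP Hp /autWP Hq; apply/autWP => c d; rewrite !permM.
by have [-> ->] := Hq (p c) (p d); apply: Hp.
Qed.

Canonical autW_group (F : seq (pattern m n)) := Group (group_set_autW F).

Lemma orbit_coloringP (F : seq (pattern m n)) (C : eqType) (col : node -> C) :
    (forall c d, col c = col d -> d \in orbit 'P (autW F :&: col_stab col) c) ->
  orbit_coloring F col.
Proof.
move=> moves; exists (autW_group F :&: col_stab_group col)%G; split=> [|c d].
  exact: subsetIl.
split=> [/moves/orbitP|[h]]; first by case=> h Hh <-; exists h.
by case/setIP=> _ /col_stabP Hh <-.
Qed.

Lemma inh_column_map (pi : 'I_n -> 'I_n) (p : {perm node}) :
  injective pi -> (forall x, (p x).2 = pi x.2) -> forall c d, inh (p c) (p d) = inh c d.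
Proof. by move=> pi_inj Hp c d; rewrite /inh !Hp (inj_eq pi_inj) (inj_eq perm_inj). Qed.

Lemma autW_small (F : seq (pattern m n)) (p : {perm node}) : n <= 1 -> p \in autW F.
Proof.
move=> n_le1; have same_col (x y : node) : x.2 = y.2.
  by apply/ord_inj; move: (ltn_ord x.2) (ltn_ord y.2); lia.
apply/autWP => c d; split.
  by rewrite /inh (same_col (p c) (p d)) (same_col c d) (inj_eq perm_inj) !eqxx.
suff exc0 c' d' : exc F c' d' = 0 by rewrite !exc0.
apply/eqP; rewrite -leqn0 leqNgt -has_count; apply/hasPn => g _.
apply/negP => /and3P[/negP neq /eqP Ec /eqP Ed]; apply: neq.
by case: c' d' Ec Ed (same_col c' d') => [i j] [i' j'] /= <- <- ->.
Qed.

Definition column_count (C : eqType) (col : node -> C) j k :=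
  \sum_(i < m) (col (i, j) == k : nat).

Definition pattern_count (F : seq (pattern m n)) (x : node) :=
  count (fun g => in_pattern g x) F.

Lemma column_count_match (C : eqType) (col : node -> C) j j' i :
  column_count col j =1 column_count col j' -> exists i', col (i', j') = col (i, j).
Proof.
move=> Ecc; have /sum_bool_gt0[i' /eqP] : 0 < column_count col j' (col (i, j)).
  by rewrite -Ecc /column_count (bigD1 i) //= eqxx.
by exists i'.
Qed.

Lemma sum_node (f : node -> nat) : \sum_e f e = \sum_(i < m) \sum_(j < n) f (i, j).
Proof. by rewrite pair_big; apply: eq_bigr => -[]. Qed.

Lemma sum_column (P : pred node) j :
  \sum_(e | P e) (e.2 == j : nat) = \sum_(i < m) (P (i, j) : nat).
Proof.
rewrite big_mkcond sum_node; apply: eq_bigr => i _.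
rewrite (bigD1 j) //= eqxx big1 ?addn0 => [|j' /negbTE neq]; first by case: ifP.
by rewrite neq; case: ifP.
Qed.

Lemma sum_pattern (P : pred node) (g : pattern m n) :
  \sum_(e | P e) (in_pattern g e : nat) = \sum_(j < n) (P (g j, j) : nat).
Proof.
rewrite big_mkcond sum_node exchange_big; apply: eq_bigr => j _.
rewrite (bigD1 (g j)) //= /in_pattern eqxx big1 ?addn0 => [|i /negbTE neq]; first by case: ifP.
by rewrite /= eq_sym neq; case: ifP.
Qed.

Lemma inh_input (C : eqType) (col : node -> C) x k :
  \sum_(e | col e == k) inh e x + (col x == k) = column_count col x.2 k.
Proof.
rewrite /column_count -(sum_column (fun e => col e == k)).
rewrite -(@sum_drop_point _ _ (fun e : node => e.2 == x.2) x) //.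
by congr (_ + _); apply: eq_bigr => e _; rewrite /inh andbC.
Qed.

Lemma exc_input (F : seq (pattern m n)) (P : pred node) x :
  \sum_(e | P e) exc F e x + pattern_count F x * P x =
  \sum_(g <- F | in_pattern g x) \sum_(e | P e) (in_pattern g e : nat).
Proof.
elim: F => [|g F IH]; first by rewrite big_nil big1.
rewrite big_cons -IH /exc /pattern_count /= big_split /= mulnDl.
case: ifP => gx; last by rewrite big1 => [|e _]; rewrite ?gx ?andbF.
rewrite -(sum_drop_point P gx); under eq_bigr do rewrite andbT.
by rewrite mul1n addnACA.
Qed.

Lemma exc_total (F : seq (pattern m n)) x :
  \sum_e exc F e x + pattern_count F x = pattern_count F x * n.
Proof.
have := exc_input F predT x; rewrite muln1 => ->.
under eq_bigr do rewrite sum_pattern sum1_card card_ord.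
by rewrite big_const_seq iter_addn_0 mulnC.
Qed.

Section Balanced.
Variables (F : seq (pattern m n)) (C : eqType) (col : node -> C).
Hypothesis col_balanced : balanced F col.

Lemma balanced_column_count c d :
  col c = col d -> column_count col c.2 =1 column_count col d.2.
Proof. by move=> Ecd k; rewrite -!inh_input Ecd; have [-> _] := col_balanced Ecd k. Qed.

Lemma balanced_pattern_count c d :
  1 < n -> col c = col d -> pattern_count F c = pattern_count F d.
Proof.
move=> n_gt1 Ecd.
have Einput : \sum_e exc F e c = \sum_e exc F e d.
  rewrite !(sum_by_class _ col); apply: eq_bigr => k _.
  by have [_ ->] := col_balanced Ecd k.
have := exc_total F c; have := exc_total F d; rewrite Einput; nia.
Qed.

End Balanced.

End Network.

Section TwoPatterns.
Variables (m n : nat) (g1 g2 : pattern m n) (C : eqType) (col : node m n -> C).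
Local Notation node := (node m n).
Local Notation F := [:: g1; g2].
Local Notation moves c d := (d \in orbit 'P (autW F :&: col_stab col) c).

Definition tau (x : node) := (in_pattern g1 x, in_pattern g2 x).
Definition swap_pair (t : bool * bool) := (t.2, t.1).
Definition rho (s : bool) t := if s then swap_pair t else t.

Lemma rhoK s : involutive (rho s).
Proof. by case: s => -[]. Qed.

Lemma pattern_count_tau x : pattern_count F x = (tau x).1 + (tau x).2.
Proof. by rewrite /pattern_count /= addn0. Qed.

Lemma excE u v : exc F u v =
  ((u != v) && (tau u).1 && (tau v).1) + ((u != v) && (tau u).2 && (tau v).2).
Proof. by rewrite /exc /= addn0 !andbA. Qed.

Lemma exc_rho s (p : {perm node}) c d :
  (forall x, tau (p x) = rho s (tau x)) -> exc F (p c) (p d) = exc F c d.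
Proof.
by move=> Hp; rewrite !excE (inj_eq perm_inj) !Hp; case: s {Hp} => //=; rewrite addnC.
Qed.

Definition label_count j k t :=
  \sum_(i < m) ((col (i, j) == k) && (tau (i, j) == t) : nat).

Lemma move_by_columns s (pi : {perm 'I_n}) c d :
    (forall j k t, label_count (pi j) k t = label_count j k (rho s t)) ->
    d.2 = pi c.2 -> col d = col c -> tau d = rho s (tau c) ->
  moves c d.
Proof.
move=> Hcount Ecol_d Ecd Etau.
pose lab s' (x : node) := (col x, rho s' (tau x)).
have row_match j : exists2 beta : {perm 'I_m},
    forall i, lab false (beta i, pi j) = lab s (i, j) & j = c.2 -> beta c.1 = d.1.
  have fibres v : \sum_i (lab s (i, j) == v : nat) = \sum_i (lab false (i, pi j) == v : nat).
    case: v => k t; transitivity (label_count j k (rho s t)).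
      apply: eq_bigr => i _; rewrite /lab xpair_eqE; congr (nat_of_bool (_ && _)).
      by apply/eqP/eqP => [<-|->]; rewrite rhoK.
    by rewrite -Hcount; apply: eq_bigr => i _; rewrite /lab xpair_eqE.
  case: (eqVneq j c.2) => [Ej|neq]; first subst j.
    have [|beta Hbeta Hpin] := perm_of_fibres_at fibres (i0 := c.1) (i1 := d.1).
      by rewrite /lab -surjective_pairing -Ecol_d -surjective_pairing Ecd Etau.
    by exists beta.
  by have [beta Hbeta] := perm_of_fibres fibres; exists beta => // /eqP; rewrite (negbTE neq).
have [beta Hbeta Hpin] := fin_all_exists2 row_match.
pose h (x : node) := (beta x.2 x.1, pi x.2).
have h_inj : injective h.
  by move=> [i j] [i' j'] [/[swap] /perm_inj Ej]; subst j' => /perm_inj ->.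
have lab_h x : col (h x) = col x /\ tau (h x) = rho s (tau x).
  by case: x => i j; have [-> ->] := Hbeta j i.
apply/orbitP; exists (perm h_inj); last first.
  by rewrite /= apermE permE /h Hpin // -Ecol_d -surjective_pairing.
rewrite inE; apply/andP; split.
  apply/autWP => u v; split; first by apply: (inh_column_map perm_inj) => x; rewrite permE.
  by apply: exc_rho => x; rewrite permE; exact: (lab_h x).2.
by apply/col_stabP => x; rewrite permE; exact: (lab_h x).1.
Qed.

Definition shared j := g1 j == g2 j.
Definition pat1 j : node := (g1 j, j).
Definition pat2 j : node := (g2 j, j).

Lemma tau_pat1 j : tau (pat1 j) = (true, shared j).
Proof. by rewrite /tau /in_pattern /= eqxx eq_sym. Qed.

Lemma tau_pat2 j : tau (pat2 j) = (shared j, true).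
Proof. by rewrite /tau /in_pattern /= eqxx. Qed.

Lemma shared_pat j : shared j -> pat2 j = pat1 j.
Proof. by rewrite /shared /pat1 /pat2 => /eqP ->. Qed.

Lemma tau_tt x : tau x = (true, true) -> x = pat1 x.2 /\ shared x.2.
Proof. by case: x => i j; rewrite /tau /in_pattern /shared /pat1 /= => -[/eqP-> /eqP->]. Qed.

Lemma tau_tf x : tau x = (true, false) -> x = pat1 x.2 /\ ~~ shared x.2.
Proof.
by case: x => i j; rewrite /tau /in_pattern /shared /pat1 /= => -[/eqP-> E]; rewrite eq_sym E.
Qed.

Lemma tau_ft x : tau x = (false, true) -> x = pat2 x.2 /\ ~~ shared x.2.
Proof.
by case: x => i j; rewrite /tau /in_pattern /shared /pat2 /= => -[E /eqP->]; rewrite E.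
Qed.

(* The column counts are kept only on the colours that occur, as a finite function, so
   that keys can be compared and counted. *)
Definition column_key j :=
  (shared j, col (pat1 j), col (pat2 j), [ffun e : node => column_count col j (col e)]).

Definition swap_key (K : bool * C * C * {ffun node -> nat}) := (K.1.1.1, K.1.2, K.1.1.2, K.2).

Lemma swap_keyK : involutive swap_key.
Proof. by case=> [[[? ?] ?] ?]. Qed.

Lemma swap_key_fixed j : col (pat1 j) = col (pat2 j) -> swap_key (column_key j) = column_key j.
Proof. by rewrite /swap_key /column_key /= => ->. Qed.

Definition mixing :=
  exists x y, [/\ tau x = (true, false), tau y = (false, true) & col x = col y].

Lemma swapped_key_cases j j' :
  column_key j' = swap_key (column_key j) -> column_key j' = column_key j \/ mixing.
Proof.
case Aj: (shared j) => Ek; first by left; rewrite Ek swap_key_fixed // shared_pat.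
right; exists (pat1 j'), (pat2 j); rewrite tau_pat1 tau_pat2 Aj.
by move: Ek; rewrite /column_key /swap_key /= Aj; case=> -> -> _ _.
Qed.

Lemma label_count_pat1 j k b :
  label_count j k (true, b) = (col (pat1 j) == k) && (shared j == b).
Proof.
rewrite /label_count (bigD1 (g1 j)) //= big1 ?addn0.
  by rewrite -[(g1 j, j)]/(pat1 j) tau_pat1 xpair_eqE eqxx.
move=> i neq; rewrite /tau /in_pattern /= [g1 j == i]eq_sym (negbTE neq).
by rewrite xpair_eqE /= andbF.
Qed.

Lemma label_count_pat2 j k :
  label_count j k (false, true) = (col (pat2 j) == k) && ~~ shared j.
Proof.
rewrite /label_count (bigD1 (g2 j)) //= big1 ?addn0.
  by rewrite -[(g2 j, j)]/(pat2 j) tau_pat2 xpair_eqE eqxx andbT eqbF_neg.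
move=> i neq; rewrite /tau /in_pattern /= [g2 j == i]eq_sym (negbTE neq).
by rewrite xpair_eqE /= !andbF.
Qed.

Lemma column_count_split j k : column_count col j k =
  label_count j k (false, false) + label_count j k (false, true) +
  label_count j k (true, false) + label_count j k (true, true).
Proof.
rewrite /column_count /label_count -!big_split /=; apply: eq_bigr => i _.
by case: (tau (i, j)) => [[] []]; case: (col (i, j) == k).
Qed.

Lemma column_count_on_colors j j' :
    (forall e, column_count col j' (col e) = column_count col j (col e)) ->
  column_count col j' =1 column_count col j.
Proof.
move=> Ecol k; case: (pickP (fun e : node => col e == k)) => [e /eqP <-|none].
  exact: Ecol.
by rewrite /column_count !big1 // => i _; rewrite none.
Qed.

Definition rho_key s K := if s then swap_key K else K.

Lemma label_count_of_key s j j' : column_key j' = rho_key s (column_key j) ->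
  forall k t, label_count j' k t = label_count j k (rho s t).
Proof.
move=> Ek k.
have [HA E1 E2 Ecc] : [/\ shared j' = shared j,
    col (pat1 j') = (if s then col (pat2 j) else col (pat1 j)),
    col (pat2 j') = (if s then col (pat1 j) else col (pat2 j)) &
    forall e, column_count col j' (col e) = column_count col j (col e)].
  by case: s Ek; rewrite /column_key /swap_key => -[-> -> -> /ffunP Ecc];
    split=> // e; have := Ecc e; rewrite !ffunE.
have E_other t : t != (false, false) -> label_count j' k t = label_count j k (rho s t).
  case: t => [[] []] // _; case: s E1 E2 {Ek} => /= E1 E2;
    rewrite ?label_count_pat1 ?label_count_pat2 HA ?E1 ?E2 ?eqbF_neg //.
  by case Aj: (shared j); rewrite ?andbF // (shared_pat Aj).
case=> [[] []]; try exact: E_other.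
have := column_count_split j' k; have := column_count_split j k.
rewrite (column_count_on_colors Ecc).
have := E_other (false, true) isT; have := E_other (true, false) isT.
have := E_other (true, true) isT.
by case: (s); rewrite /= /swap_pair /=; lia.
Qed.

Definition same_state (c d : node) := column_key d.2 = column_key c.2 /\ tau d = tau c.

Definition swapped_state (c d : node) :=
  column_key d.2 = swap_key (column_key c.2) /\ tau d = swap_pair (tau c).

Lemma move_same c d : same_state c d -> col d = col c -> moves c d.
Proof.
move=> [Ek Et] Ecd; apply: (move_by_columns (s := false) (pi := tperm c.2 d.2)) => //.
  by move=> j; apply: label_count_of_key; case: tpermP => [->|->|].
by rewrite tpermL.
Qed.

Section Balanced.
Hypotheses (col_balanced : balanced F col) (n_gt1 : 1 < n).

Lemma tau_weight_col x y : col x = col y -> (tau x).1 + (tau x).2 = (tau y).1 + (tau y).2.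
Proof. by rewrite -!pattern_count_tau; apply: balanced_pattern_count. Qed.

Lemma shared_column j j' :
    column_count col j =1 column_count col j' -> shared j ->
  shared j' /\ col (pat1 j') = col (pat1 j).
Proof.
move=> Ecc Aj; have [i' E] := column_count_match (g1 j) Ecc.
have := tau_weight_col E; rewrite -[(g1 j, j)]/(pat1 j) tau_pat1 Aj.
case Et: (tau (i', j')) => [[] []] //= _.
by have [/= <- ->] := tau_tt Et.
Qed.

Lemma unshared_column x j' : column_count col x.2 =1 column_count col j' ->
  (tau x).1 + (tau x).2 = 1 -> col x = col (pat1 j') \/ col x = col (pat2 j').
Proof.
case: x => i j /= Ecc Tx; have [i' E] := column_count_match i Ecc.
have := tau_weight_col E; rewrite Tx -E.
case Et: (tau (i', j')) => [[] []] //= _.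
  by have [/= <- _] := tau_tf Et; left.
by have [/= <- _] := tau_ft Et; right.
Qed.

Lemma column_pair_cases j j' : column_count col j =1 column_count col j' ->
  shared j' = shared j /\
  (col (pat1 j') = col (pat1 j) /\ col (pat2 j') = col (pat2 j) \/
   col (pat1 j') = col (pat2 j) /\ col (pat2 j') = col (pat1 j)).
Proof.
move=> Ecc; have Ecc' : column_count col j' =1 column_count col j by move=> k; rewrite Ecc.
case Aj: (shared j).
  have [Aj' E1] := shared_column Ecc Aj.
  by split; [rewrite Aj' | left; rewrite (shared_pat Aj) (shared_pat Aj')].
have Aj' : shared j' = false.
  by apply/negbTE/negP => /(shared_column Ecc')[]; rewrite Aj.
have single j0 : shared j0 = false -> (tau (pat1 j0)).1 + (tau (pat1 j0)).2 = 1 /\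
    (tau (pat2 j0)).1 + (tau (pat2 j0)).2 = 1.
  by rewrite tau_pat1 tau_pat2 => ->.
have [T1 T2] := single j Aj; have [T1' T2'] := single j' Aj'.
split=> //.
case: (unshared_column (x := pat1 j) Ecc T1) => M1;
case: (unshared_column (x := pat2 j) Ecc T2) => M2;
case: (unshared_column (x := pat1 j') Ecc' T1') => M3;
case: (unshared_column (x := pat2 j') Ecc' T2') => M4;
  first [by left; split; congruence | by right; split; congruence].
Qed.

Lemma column_key_cases j j' : column_count col j =1 column_count col j' ->
  column_key j' = column_key j \/ column_key j' = swap_key (column_key j).
Proof.
move=> Ecc; have [HA [[E1 E2]|[E1 E2]]] := column_pair_cases Ecc; [left|right];
  rewrite /column_key /swap_key /= HA E1 E2; congr (_, _);
  by apply/ffunP => e; rewrite !ffunE Ecc.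
Qed.

Lemma state_cases_same_key c d : col c = col d -> column_key d.2 = column_key c.2 ->
  same_state c d \/ mixing /\ swapped_state c d.
Proof.
move=> Ecd Ek.
have [E1 E2] : col (pat1 d.2) = col (pat1 c.2) /\ col (pat2 d.2) = col (pat2 c.2).
  by move: Ek; rewrite /column_key => -[_ -> ->].
case Ec: (tau c) (tau_weight_col Ecd) => [[] []]; case Ed: (tau d) => [[] []] //= _;
  try by left; rewrite /same_state Ec Ed.
- have [Hc _] := tau_tf Ec; have [Hd _] := tau_ft Ed.
  right; split; first by exists c, d.
  rewrite /swapped_state Ek Ec Ed swap_key_fixed //.
  by rewrite -(congr1 col Hc) Ecd (congr1 col Hd) E2.
- have [Hc _] := tau_ft Ec; have [Hd _] := tau_tf Ed.
  right; split; first by exists d, c.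
  rewrite /swapped_state Ek Ec Ed swap_key_fixed //.
  by rewrite -E1 -(congr1 col Hd) -Ecd (congr1 col Hc).
Qed.

Lemma state_cases_swapped_key c d : col c = col d ->
    column_key d.2 = swap_key (column_key c.2) ->
  same_state c d \/ mixing /\ swapped_state c d.
Proof.
move=> Ecd Ek.
have [E1 E2] : col (pat1 d.2) = col (pat2 c.2) /\ col (pat2 d.2) = col (pat1 c.2).
  by move: Ek; rewrite /column_key /swap_key => -[_ -> ->].
case Ec: (tau c) (tau_weight_col Ecd) => [[] []]; case Ed: (tau d) => [[] []] //= _.
- by case: (swapped_key_cases Ek) => [Ek'|mix]; [left | right];
    rewrite /same_state /swapped_state Ec Ed.
- have [Hc _] := tau_tf Ec; have [Hd _] := tau_tf Ed.
  left; rewrite /same_state Ec Ed Ek swap_key_fixed //.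
  by rewrite -(congr1 col Hc) Ecd (congr1 col Hd) E1.
- by right; split; [exists c, d | rewrite /swapped_state Ec Ed].
- by right; split; [exists d, c | rewrite /swapped_state Ec Ed].
- have [Hc _] := tau_ft Ec; have [Hd _] := tau_ft Ed.
  left; rewrite /same_state Ec Ed Ek swap_key_fixed //.
  by rewrite -E2 -(congr1 col Hd) -Ecd (congr1 col Hc).
- by case: (swapped_key_cases Ek) => [Ek'|mix]; [left | right];
    rewrite /same_state /swapped_state Ec Ed.
Qed.

Lemma node_state_cases c d : col c = col d -> same_state c d \/ mixing /\ swapped_state c d.
Proof.
move=> Ecd; have [] := column_key_cases (balanced_column_count col_balanced Ecd).
  exact: state_cases_same_key.
exact: state_cases_swapped_key.
Qed.

Lemma mixing_pattern_colors : mixing ->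
  forall k, \sum_(j < n) (col (pat1 j) == k : nat) = \sum_(j < n) (col (pat2 j) == k : nat).
Proof.
move=> [x [y [Tx Ty Exy]]] k.
have input z : \sum_(e | col e == k) exc F e z + pattern_count F z * (col z == k) =
    \sum_(g <- F | in_pattern g z) \sum_(j < n) (col (g j, j) == k : nat).
  by rewrite exc_input; apply: eq_bigr => g _; rewrite sum_pattern.
have := input x; have := input y; rewrite !pattern_count_tau Tx Ty !big_cons !big_nil.
case: Tx Ty => -> -> [-> ->] /=; rewrite !addn0 Exy => <- <-.
by have [_ ->] := col_balanced Exy k.
Qed.

(* Unless the key of [j0] is swap-invariant, the columns with that key are the unshared
   ones whose [g1]-node has the colour [a] of [pat1 j0], and those with the swapped key
   are the unshared ones whose [g2]-node has colour [a]; [mixing_pattern_colors]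
   balances the two counts. *)
Lemma count_swap_key : mixing -> forall j0,
  \sum_(j < n) (column_key j == swap_key (column_key j0) : nat) =
  \sum_(j < n) (column_key j == column_key j0 : nat).
Proof.
move=> mix j0; have [E12|N12] := eqVneq (col (pat1 j0)) (col (pat2 j0)).
  by rewrite swap_key_fixed.
have nA0 : ~~ shared j0 by apply: contra N12 => /shared_pat ->.
have same_key_iff j :
    (column_key j == column_key j0) = ~~ shared j && (col (pat1 j) == col (pat1 j0)).
  apply/eqP/andP => [Ek|[nA /eqP E]]; first by move: Ek; rewrite /column_key => -[-> -> _ _].
  have [//|] := column_key_cases (balanced_column_count col_balanced (esym E)).
  by rewrite /column_key /swap_key => -[_ E' _ _]; rewrite -E E' eqxx in N12.
have swapped_key_iff j :
    (column_key j == swap_key (column_key j0)) = ~~ shared j && (col (pat2 j) == col (pat1 j0)).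
  apply/eqP/andP => [Ek|[nA /eqP E]].
    by move: Ek; rewrite /column_key /swap_key => -[-> _ -> _].
  have [|//] := column_key_cases (balanced_column_count col_balanced (esym E)).
  by rewrite /column_key => -[_ _ E' _]; rewrite -E E' eqxx in N12.
under eq_bigr do rewrite swapped_key_iff; under [RHS]eq_bigr do rewrite same_key_iff.
have split_shared (q : 'I_n -> node) : \sum_(j < n) (col (q j) == col (pat1 j0) : nat) =
    \sum_(j < n) (shared j && (col (q j) == col (pat1 j0)) : nat) +
    \sum_(j < n) (~~ shared j && (col (q j) == col (pat1 j0)) : nat).
  by rewrite -big_split; apply: eq_bigr => j _; case: (shared j); rewrite /= ?addn0.
have := mixing_pattern_colors mix (col (pat1 j0)); rewrite !split_shared.
have -> : \sum_(j < n) (shared j && (col (pat1 j) == col (pat1 j0)) : nat) =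
    \sum_(j < n) (shared j && (col (pat2 j) == col (pat1 j0)) : nat).
  by apply: eq_bigr => j _; case Aj: (shared j); rewrite // shared_pat.
by move/addnI.
Qed.

Lemma global_swap : mixing ->
  exists pi : {perm 'I_n}, forall j, column_key (pi j) = swap_key (column_key j).
Proof.
move=> mix; apply: (perm_of_fibres (a := swap_key \o column_key)) => K /=.
under eq_bigr do rewrite (can2_eq swap_keyK swap_keyK).
case: (pickP (fun j => column_key j == K)) => [j0 /eqP <-|none].
  exact: count_swap_key.
case: (pickP (fun j => column_key j == swap_key K)) => [j0 /eqP Ej0|none'].
  by rewrite -[K]swap_keyK -Ej0 count_swap_key.
by rewrite !big1 // => j _; rewrite ?none ?none'.
Qed.

Lemma move_swapped c d : mixing -> swapped_state c d -> col d = col c -> moves c d.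
Proof.
move=> mix [Ek Et] Ecd; have [pi Hpi] := global_swap mix.
have Hcount j : forall k t, label_count (pi j) k t = label_count j k (rho true t).
  exact: label_count_of_key.
have /sum_bool_gt0[i /andP[/eqP Ci /eqP Ti]] :
    0 < label_count (pi c.2) (col c) (rho true (tau c)).
  by rewrite Hcount rhoK /label_count (bigD1 c.1) //= -surjective_pairing !eqxx.
apply: (orbit_trans (y := (i, pi c.2))).
  apply: move_same; last by rewrite Ecd Ci.
  by split; rewrite /= ?Hpi ?Ek ?Et ?Ti.
exact: (move_by_columns Hcount).
Qed.

Lemma balanced_col_orbits c d : col c = col d -> moves c d.
Proof.
move=> Ecd; have [same|[mix swapped]] := node_state_cases Ecd.
  exact: move_same.
exact: move_swapped.
Qed.

End Balanced.

End TwoPatterns.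

Lemma two_patterns_orbit_coloring m n (g1 g2 : pattern m n) (C : eqType)
    (col : node m n -> C) :
  balanced [:: g1; g2] col -> orbit_coloring [:: g1; g2] col.
Proof.
move=> col_balanced; apply: orbit_coloringP => c d Ecd.
have [n_le1|n_gt1] := leqP n 1; last exact: balanced_col_orbits.
apply/orbitP; exists (tperm c d); last by rewrite /= apermE tpermL.
rewrite inE autW_small //=; apply/col_stabP => x.
by case: tpermP => [->|->|].
Qed.

Lemma exc_dup m n (g : pattern m n) c d : exc [:: g; g] c d = 2 * exc [:: g] c d.
Proof. by rewrite /exc /= !addn0 mul2n addnn. Qed.

Lemma autW_dup m n (g : pattern m n) : autW [:: g; g] = autW [:: g].
Proof.
apply/setP => p; rewrite !inE; apply: eq_forallb => c; apply: eq_forallb => d.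
by rewrite !exc_dup eqn_pmul2l.
Qed.

Lemma balanced_dup m n (g : pattern m n) (C : eqType) (col : node m n -> C) :
  balanced [:: g] col -> balanced [:: g; g] col.
Proof.
move=> col_balanced c d Ecd k; have [Einh Eexc] := col_balanced c d Ecd k.
by split=> //; rewrite !(eq_bigr _ (fun e _ => exc_dup g e _)) -!big_distrr Eexc.
Qed.

Theorem theorem6p5 (m n : nat) (F : seq (pattern m n)) :
  uniq F -> (size F = 1 \/ size F = 2) ->
  forall (C : eqType) (col : node m n -> C),
    balanced F col -> orbit_coloring F col.
Proof.
move=> _ size_F C col.
case: F size_F => [|g1 [|g2 [|? ?]]] size_F col_balanced; try by case: size_F.
  have := two_patterns_orbit_coloring (balanced_dup col_balanced).
  by rewrite /orbit_coloring autW_dup.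
exact: two_patterns_orbit_coloring.
Qed.
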